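(* Let $(G,\sigma)$ be a connection graph and $i,j\in V$ distinct fixed vertices. Let $\mathcal{V}_{i\to j}:V\to\mathbb{R}^{d\times d}$ be the connection voltage function, i.e. the unique solution of $(\mathcal{L}\mathcal{V}_{i\to j})(x)=0_{d\times d}$ for $x\in V\setminus\{i,j\}$, $\mathcal{V}_{i\to j}(i)=I_{d\times d}$, $\mathcal{V}_{i\to j}(j)=0_{d\times d}$. Then for every $x\in V$, $$\mathcal{V}_{i\to j}(x)=\mathbb{P}^x[T^0_i<T^0_j]\cdot\Omega^0_{xi}(j).$$
   Context: A connection graph $(G,\sigma)$: finite connected weighted graph $G=(V,E,W)$ with $w_{ij}>0$ iff $\{i,j\}\in E$, $\deg(i)=\sum_j w_{ij}$, and $\sigma$ mapping oriented edges to $\mathsf{O}(d)$ with $\sigma_{ji}=\sigma_{ij}^{\mathrm T}$; $(\mathcal{L}f)(x)=\sum_{y\sim x}w_{xy}(f(x)-\sigma_{xy}f(y))$ for $f:V\to\mathbb{R}^{d\times d}$. $(X_t)$ is the simple random walk with transition probabilities $w_{xy}/\deg(x)$; $\mathbb{P}^x,\mathbb{E}^x$ denote probability/expectation given $X_0=x$; $T^0_k=\inf\{t\ge0:X_t=k\}$. The conditional mean path signature is $\Omega^0_{xi}(j)=\mathbb{E}^x\big[\prod_{\ell=1}^{T^0_i}\sigma_{X_{\ell-1}X_\ell}\mid T^0_i<T^0_j\big]$ (ordered product, empty product $=I_d$). *)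

From HB Require Import structures.
From mathcomp Require Import all_boot all_order all_algebra.
From mathcomp Require Import all_classical all_reals all_analysis.
Set Implicit Arguments. Unset Strict Implicit. Unset Printing Implicit Defensive.
Import Order.TTheory GRing.Theory Num.Theory.
Import numFieldNormedType.Exports.
Local Open Scope ring_scope.

Section ConnectionGraph.
Variables (R : realType) (T : finType) (d : nat).
Variable w : T -> T -> R.                 (* edge weights, w x y > 0 iff xy edge *)
Variable sigma : T -> T -> 'M[R]_d.

Definition deg (x : T) : R := \sum_(y : T) w x y.

Definition is_connection_graph : Prop :=
  (forall x y, 0 <= w x y) /\
  (forall x y, w x y = w y x) /\
  (forall x, w x x = 0) /\
  (forall x y, connect [rel a b | 0 < w a b] x y) /\
  (forall x y, 0 < w x y -> sigma y x = (sigma x y)^T) /\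
  (forall x y, 0 < w x y -> (sigma x y)^T *m sigma x y = 1%:M).

Definition conn_laplacian (f : T -> 'M[R]_d) (x : T) : 'M[R]_d :=
  \sum_(y : T) w x y *: (f x - sigma x y *m f y).

Definition trans (x y : T) : R := w x y / deg x.

(* A finite trajectory started at x is x :: s (s = (X_1,...,X_n)).
   Its consecutive steps (X_{l-1}, X_l), l = 1..n: *)
Definition steps (x : T) (s : seq T) : seq (T * T) := zip (belast x s) s.

(* P^x[X_1 = s_1, ..., X_n = s_n] *)
Definition path_prob (x : T) (s : seq T) : R :=
  \prod_(e <- steps x s) trans e.1 e.2.

Definition path_sigma (x : T) (s : seq T) : 'M[R]_d :=
  foldr (fun e M => sigma e.1 e.2 *m M) 1%:M (steps x s).

(* the trajectory x :: s realises {T^0_i = size s < T^0_j}: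
   it ends at i and visits neither i nor j at times 0 .. size s - 1 *)
Definition first_hit (i j x : T) (s : seq T) : bool :=
  (last x s == i) && all (fun y => (y != i) && (y != j)) (belast x s).

(* P^x[T^0_i = n < T^0_j] *)
Definition hit_prob_n (i j x : T) (n : nat) : R :=
  \sum_(s : n.-tuple T | first_hit i j x s) path_prob x s.

(* P^x[T^0_i < T^0_j] = sum_n P^x[T^0_i = n < T^0_j] *)
Definition hit_prob (i j x : T) : R := limn (series (hit_prob_n i j x)).

(* E^x[ prod sigma ; T^0_i = n < T^0_j ] *)
Definition hit_sigma_n (i j x : T) (n : nat) : 'M[R]_d :=
  \sum_(s : n.-tuple T | first_hit i j x s) path_prob x s *: path_sigma x s.

(* E^x[ prod_{l=1}^{T^0_i} sigma ; T^0_i < T^0_j ], entrywise series *)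
Definition hit_sigma (i j x : T) : 'M[R]_d :=
  \matrix_(a < d, b < d) limn (series (fun n => hit_sigma_n i j x n a b)).

(* conditional mean path signature Omega^0_{xi}(j) = E[Y 1_A] / P[A]
   (MathComp convention: division by 0 gives 0) *)
Definition Omega0 (x i j : T) : 'M[R]_d := (hit_prob i j x)^-1 *: hit_sigma i j x.

End ConnectionGraph.

From HB Require Import structures.
From mathcomp Require Import all_boot all_order all_algebra.
From mathcomp Require Import all_classical all_reals all_analysis.
From mathcomp Require Import ring.
Import Order.TTheory GRing.Theory Num.Theory.
Import numFieldNormedType.Exports.
Local Open Scope ring_scope.
Set Implicit Arguments. Unset Strict Implicit. Unset Printing Implicit Defensive.

(* Off {i, j} the equation L V = 0 says V = 1_i I + K V, where
   K f x = sum_y p(x, y) sigma_xy f(y) is the connection-twisted transition operator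
   killed on {i, j}.  Iterating, V = sum_(k < n) K^k (1_i I) + K^n V, and
   K^k (1_i I) x is exactly E^x[prod sigma ; T_i = k < T_j].  Since the sigma_xy are
   orthogonal, Jensen's inequality bounds the squared Frobenius norm of K^n V by the
   scalar killed walk applied to |V|^2, which decays geometrically because every vertex
   reaches {i, j}.  Hence V x = E^x[prod sigma ; T_i < T_j] = P^x[T_i < T_j] Omega x;
   when P^x[T_i < T_j] = 0 the same domination makes every term, hence V x, vanish. *)

Lemma iter_morphD (U : nmodType) (A : U -> U) :
  {morph A : u v / u + v} -> forall n, {morph iter n A : u v / u + v}.
Proof. by move=> AD; elim=> [//|n IH] u v /=; rewrite IH AD. Qed.

Lemma iter_fixpoint_expand (U : nmodType) (A : U -> U) (g f : U) :
  {morph A : u v / u + v} -> f = g + A f ->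
  forall n, f = \sum_(k < n) iter k A g + iter n A f.
Proof.
move=> AD ef; elim=> [|n IH]; first by rewrite big_ord0 add0r.
by rewrite {1}IH {1}ef iter_morphD // big_ord_recr -addrA -iterSr.
Qed.

Lemma big_tuple_cons (I : finType) (U : nmodType) n (F : n.+1.-tuple I -> U) :
  \sum_(t : n.+1.-tuple I) F t = \sum_(y : I) \sum_(t : n.-tuple I) F [tuple of y :: t].
Proof.
rewrite pair_big /= (reindex (fun p : I * n.-tuple I => [tuple of p.1 :: p.2])) //=.
apply: onW_bij; exists (fun t : n.+1.-tuple I => (thead t, [tuple of behead t])).
- by case=> y t /=; congr pair; apply: val_inj.
- by move=> t; apply: val_inj; case: t => [[|y s]].
Qed.

Lemma series_ge0_lim_eq0 (R : realType) (u : R ^nat) (M : R) :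
  (forall n, 0 <= u n) -> (forall n, series u n <= M) ->
  limn (series u) = 0 -> forall k, u k = 0.
Proof.
move=> u0 uM lim0 k.
have incr : {homo series u : n m / (n <= m)%N >-> n <= m}.
  move=> n m nm; rewrite /series /= (big_cat_nat _ nm) //= lerDl.
  by apply: sumr_ge0 => l _; apply: u0.
have cvg_u : cvgn (series u).
  by apply: nondecreasing_is_cvgn => //; exists M => _ [n _ <-].
have := nondecreasing_cvgn_le incr cvg_u k.+1.
rewrite lim0 /series /= big_nat_recr //= => uk_le0.
apply/eqP; rewrite eq_le u0 andbT; apply: le_trans uk_le0.
by rewrite lerDr; apply: sumr_ge0 => l _; apply: u0.
Qed.

Lemma sqr_wmean_le (R : realFieldType) (I : finType) (p g : I -> R) :
  (forall y, 0 <= p y) -> \sum_y p y = 1 ->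
  (\sum_y p y * g y) ^+ 2 <= \sum_y p y * g y ^+ 2.
Proof.
move=> p0 p1; set m := \sum_y p y * g y.
have variance : \sum_y p y * (g y - m) ^+ 2 = \sum_y p y * g y ^+ 2 - m ^+ 2.
  rewrite (eq_bigr (fun y => p y * g y ^+ 2 - (m *+ 2 * (p y * g y) - m ^+ 2 * p y)));
    last by move=> y _; ring.
  by rewrite !sumrB -!mulr_sumr p1 -/m; ring.
by rewrite -subr_ge0 -variance; apply: sumr_ge0 => y _; rewrite mulr_ge0 ?sqr_ge0.
Qed.

Section Frobenius.
Variables (R : realFieldType) (d : nat).

Definition frob2 (F : 'M[R]_d) : R := \sum_a \sum_b F a b ^+ 2.

Lemma frob2_ge0 (F : 'M[R]_d) : 0 <= frob2 F.
Proof. by apply: sumr_ge0 => a _; apply: sumr_ge0 => b _; apply: sqr_ge0. Qed.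

Lemma frob2_0 : frob2 0 = 0.
Proof. by apply: big1 => a _; apply: big1 => b _; rewrite mxE expr0n. Qed.

Lemma sqr_mxentry_le_frob2 (F : 'M[R]_d) a b : F a b ^+ 2 <= frob2 F.
Proof.
rewrite /frob2 (bigD1 a) //= (bigD1 b) //= -addrA lerDl.
by rewrite addr_ge0 //; do ![apply: sumr_ge0 => ? _]; apply: sqr_ge0.
Qed.

Lemma frob2_tr (F : 'M[R]_d) : frob2 F = \tr (F^T *m F).
Proof.
rewrite /frob2 /mxtrace exchange_big; apply: eq_bigr => b _.
by rewrite mxE; apply: eq_bigr => a _; rewrite mxE expr2.
Qed.

Lemma frob2_orthomxl (S F : 'M[R]_d) : S^T *m S = 1%:M -> frob2 (S *m F) = frob2 F.
Proof. by move=> SS; rewrite !frob2_tr trmx_mul -mulmxA (mulmxA S^T) SS mul1mx. Qed.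

End Frobenius.

Section KilledWalk.
Variables (R : realType) (T : finType) (P : T -> T -> R) (B : pred T).
Hypothesis P_ge0 : forall x y, 0 <= P x y.
Hypothesis P_sum1 : forall x, \sum_y P x y = 1.

Definition killed_op (f : T -> R) (x : T) : R :=
  if B x then 0 else \sum_y P x y * f y.

Definition survival (n : nat) : T -> R := iter n killed_op (fun=> 1).

Lemma killed_opD : {morph killed_op : f g / f + g}.
Proof.
move=> f g; rewrite !addrfctE; apply: funext => x; rewrite /killed_op.
case: (B x); first by rewrite addr0.
by rewrite -big_split; apply: eq_bigr => y _; rewrite mulrDr.
Qed.

Lemma iter_killed_opZ n c f x :
  iter n killed_op (fun y => c * f y) x = c * iter n killed_op f x.
Proof.
elim: n x => [//|n IH] x /=; rewrite /killed_op; case: (B x); first by rewrite mulr0.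
by rewrite mulr_sumr; apply: eq_bigr => y _; rewrite IH mulrCA.
Qed.

Lemma iter_killed_op_le n f g : (forall y, f y <= g y) ->
  forall x, iter n killed_op f x <= iter n killed_op g x.
Proof.
move=> fg; elim: n => [//|n IH] x /=; rewrite /killed_op; case: (B x) => //.
by apply: ler_sum => y _; rewrite ler_wpM2l.
Qed.

Lemma iter_killed_op_ge0 n f : (forall y, 0 <= f y) ->
  forall x, 0 <= iter n killed_op f x.
Proof.
move=> f0; elim: n => [//|n IH] x /=; rewrite /killed_op; case: (B x) => //.
by apply: sumr_ge0 => y _; rewrite mulr_ge0.
Qed.

Lemma survival_ge0 n x : 0 <= survival n x.
Proof. exact: iter_killed_op_ge0. Qed.

Lemma survival_nonincr n m x : (n <= m)%N -> survival m x <= survival n x.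
Proof.
move/subnK <-; rewrite /survival addnC iterD.
apply: iter_killed_op_le => {}x; elim: (m - n)%N x => [//|k IH] x /=.
rewrite /killed_op; case: (B x) => //; rewrite -[leRHS](P_sum1 x).
by apply: ler_sum => y _; rewrite ler_piMr.
Qed.

Lemma survival_le1 n x : survival n x <= 1.
Proof. exact: (survival_nonincr x (leq0n n)). Qed.

Lemma sum_iter_killed_op_le1 (f : T -> R) n x :
  (forall y, 0 <= f y <= (B y)%:R) -> \sum_(k < n) iter k killed_op f x <= 1.
Proof.
move=> f_ind.
have one_fix : (fun=> 1) = (fun y => (B y)%:R) + killed_op (fun=> 1).
  rewrite addrfctE; apply: funext => y; rewrite /killed_op; case: (B y).
    by rewrite addr0.
  by rewrite add0r -[LHS](P_sum1 y); apply: eq_bigr => z _; rewrite mulr1.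
have := congr1 (fun g : T -> R => g x) (iter_fixpoint_expand killed_opD one_fix n).
rewrite /= fct_sumE => ->; apply: ler_wpDr; first exact: survival_ge0.
apply: ler_sum => k _; apply: iter_killed_op_le => y.
by case/andP: (f_ind y).
Qed.

Variables (d : nat) (S : T -> T -> 'M[R]_d).
Hypothesis S_orth : forall x y, 0 < P x y -> (S x y)^T *m S x y = 1%:M.

Definition conn_killed_op (f : T -> 'M[R]_d) (x : T) : 'M[R]_d :=
  if B x then 0 else \sum_y P x y *: (S x y *m f y).

Lemma conn_killed_opD : {morph conn_killed_op : f g / f + g}.
Proof.
move=> f g; rewrite !addrfctE; apply: funext => x; rewrite /conn_killed_op.
case: (B x); first by rewrite addr0.
by rewrite -big_split; apply: eq_bigr => y _; rewrite mulmxDr scalerDr.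
Qed.

Lemma frob2_conn_killed_op_le f x :
  frob2 (conn_killed_op f x) <= killed_op (fun y => frob2 (f y)) x.
Proof.
rewrite /conn_killed_op /killed_op; case: (B x); first by rewrite frob2_0.
have orth_inv y : P x y * frob2 (f y) = P x y * frob2 (S x y *m f y).
  have [->|Pxy] := eqVneq (P x y) 0; first by rewrite !mul0r.
  by rewrite frob2_orthomxl // S_orth // lt_def Pxy P_ge0.
rewrite (eq_bigr _ (fun y _ => orth_inv y)).
pose e y a b := (S x y *m f y) a b.
have jensen a b : (\sum_y P x y * e y a b) ^+ 2 <= \sum_y P x y * e y a b ^+ 2.
  exact: sqr_wmean_le.
have reorder : \sum_y P x y * frob2 (S x y *m f y) =
                \sum_a \sum_b \sum_y P x y * e y a b ^+ 2.
  under eq_bigr do rewrite /frob2 mulr_sumr.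
  rewrite exchange_big; apply: eq_bigr => a _.
  by under eq_bigr do rewrite mulr_sumr; rewrite exchange_big.
rewrite reorder; apply: ler_sum => a _; apply: ler_sum => b _.
by rewrite summxE; under eq_bigr do rewrite mxE; apply: jensen.
Qed.

Lemma frob2_iter_conn_killed_op_le n f x :
  frob2 (iter n conn_killed_op f x) <= iter n killed_op (fun y => frob2 (f y)) x.
Proof.
elim: n x => [//|n IH] x; apply: le_trans (frob2_conn_killed_op_le _ x) _.
exact: (@iter_killed_op_le 1).
Qed.

Hypothesis reach_B : forall x, exists2 y, B y & connect [rel a b | 0 < P a b] x y.

Lemma survival_lt1 x : exists n, survival n x < 1.
Proof.
have [y By /connectP[p]] := reach_B x.
elim: p x => [|z p IH] x /= => [_ <-|/andP[Pxz zp] ylast].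
  by exists 1%N; rewrite /survival /= /killed_op By.
have [n zn] := IH z zp ylast.
case Bx : (B x); first by exists 1%N; rewrite /survival /= /killed_op Bx.
exists n.+1; rewrite /survival iterS /killed_op Bx -/(survival n).
have loss : 1 - \sum_u P x u * survival n u = \sum_u P x u * (1 - survival n u).
  by rewrite -{1}(P_sum1 x) -sumrB; apply: eq_bigr => u _; ring.
rewrite -subr_gt0 loss (bigD1 z) //= ltr_pwDl ?mulr_gt0 ?subr_gt0 //.
by apply: sumr_ge0 => u _; rewrite mulr_ge0 ?subr_ge0 ?survival_le1.
Qed.

Lemma survival_unif_lt1 :
  exists N q, [/\ 0 <= q, q < 1 & forall y, survival N y <= q].
Proof.
suff [N [q [q0 q1 Nq]]] : exists N q, [/\ 0 <= q, q < 1 &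
    forall y, y \in enum T -> survival N y <= q].
  by exists N, q; split=> // y; apply: Nq; rewrite mem_enum.
elim: (enum T) => [|y s [N [q [q0 q1 Nq]]]]; first by exists 0%N, 0.
have [n yn] := survival_lt1 y.
exists (maxn N n), (Num.max q (survival n y)); split.
- by rewrite le_max q0.
- by rewrite gt_max q1 yn.
move=> z; rewrite inE => /orP[/eqP ->|zs].
  by rewrite (le_trans (survival_nonincr _ (leq_maxr N n))) // le_max lexx orbT.
by rewrite (le_trans (survival_nonincr _ (leq_maxl N n))) // le_max Nq.
Qed.

Lemma survival_cvg0 x : (survival^~ x @ \oo --> (0 : R))%classic.
Proof.
have [N [q [q0 q1 Nq]]] := survival_unif_lt1.
have geom k : survival (k * N) x <= q ^+ k.
  elim: k => [|k IH]; first by rewrite mul0n expr0 survival_le1.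
  rewrite mulSn addnC /survival iterD exprS -/(survival (k * N)).
  apply: le_trans (ler_wpM2l q0 IH); rewrite -iter_killed_opZ.
  by apply: iter_killed_op_le => y; rewrite mulr1; apply: Nq.
apply/cvgr0Pnorm_lt => e e0.
have normq_lt1 : `|q| < 1 by rewrite ger0_norm.
have [K _ qK] := (cvgr0Pnorm_lt _).1 (cvg_expr normq_lt1) e e0.
exists (K * N)%N => // n /= Kn.
rewrite ger0_norm ?survival_ge0 //.
rewrite (le_lt_trans (survival_nonincr x Kn)) // (le_lt_trans (geom K)) //.
exact: le_lt_trans (ler_norm _) (qK K (leqnn K)).
Qed.

Lemma iter_conn_killed_op_cvg0 f x a b :
  ((fun n => iter n conn_killed_op f x a b) @ \oo --> (0 : R))%classic.
Proof.
set c := \sum_y frob2 (f y).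
have bound n : `|iter n conn_killed_op f x a b| <= Num.sqrt (survival n x * c).
  rewrite -sqrtr_sqr ler_sqrt ?mulr_ge0 ?survival_ge0 ?sumr_ge0 //; last first.
    by move=> y _; apply: frob2_ge0.
  apply: le_trans (sqr_mxentry_le_frob2 _ a b) _.
  apply: le_trans (frob2_iter_conn_killed_op_le n f x) _.
  rewrite mulrC -iter_killed_opZ; apply: iter_killed_op_le => y.
  rewrite mulr1 /c (bigD1 y) //= lerDl.
  by apply: sumr_ge0 => z _; apply: frob2_ge0.
have sqrt_cvg0 : ((fun n => Num.sqrt (survival n x * c)) @ \oo --> (0 : R))%classic.
  rewrite -sqrtr0 -(mul0r c).
  exact: cvg_comp (cvgM (survival_cvg0 x) (cvg_cst c)) (@sqrt_continuous _ _).
apply: (@squeeze_cvgr _ _ _ _ (fun n => - Num.sqrt (survival n x * c))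
                             (fun n => Num.sqrt (survival n x * c))) => //.
- by apply: nearW => n; rewrite -ler_norml.
- by rewrite -oppr0; apply: cvgN.
Qed.

Lemma conn_killed_series_cvg (g f : T -> 'M[R]_d) x a b : f = g + conn_killed_op f ->
  (series (fun k => iter k conn_killed_op g x a b) @ \oo --> f x a b)%classic.
Proof.
move=> f_fix.
have partial n : series (fun k => iter k conn_killed_op g x a b) n =
                 f x a b - iter n conn_killed_op f x a b.
  have := congr1 (fun h : T -> 'M[R]_d => h x a b) (iter_fixpoint_expand conn_killed_opD f_fix n).
  rewrite addrfctE fct_sumE mxE summxE => ->.
  by rewrite addrK /series /= big_mkord.
rewrite (funext partial) -[X in (_ --> X)%classic]subr0.
exact: cvgB (cvg_cst _) (iter_conn_killed_op_cvg0 f x a b).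
Qed.

End KilledWalk.

Section ConnectionGraph.
Variables (R : realType) (T : finType) (d : nat).
Variables (w : T -> T -> R) (sigma : T -> T -> 'M[R]_d).
Hypothesis HG : is_connection_graph w sigma.
Variables (i j : T).
Hypothesis hij : i != j.

Let w_ge0 x y : 0 <= w x y. Proof. by case: HG. Qed.

Let w_connected x y : connect [rel a b | 0 < w a b] x y.
Proof. by case: HG => _ [_ [_ []]]. Qed.

Lemma deg_gt0 x : 0 < deg w x.
Proof.
have [z xz] : exists z, x != z.
  by case: (eqVneq x i) => [->|]; [exists j | exists i].
case/connectP: (w_connected x z) => -[/= _ exz|y p /= /andP[wxy _] _].
  by rewrite exz eqxx in xz.
rewrite /deg (bigD1 y) //= ltr_pwDl //.
by apply: sumr_ge0 => u _; apply: w_ge0.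
Qed.

Lemma trans_ge0 x y : 0 <= trans w x y.
Proof. by rewrite divr_ge0 ?w_ge0 // ltW // deg_gt0. Qed.

Lemma trans_sum1 x : \sum_y trans w x y = 1.
Proof. by rewrite -mulr_suml divff // gt_eqF // deg_gt0. Qed.

Lemma trans_gt0E x y : (0 < trans w x y) = (0 < w x y).
Proof. by rewrite pmulr_lgt0 // invr_gt0 deg_gt0. Qed.

Lemma sigma_orth x y : 0 < trans w x y -> (sigma x y)^T *m sigma x y = 1%:M.
Proof. by rewrite trans_gt0E; case: HG => _ [_ [_ [_ [_]]]]; apply. Qed.

Definition endpoints : pred T := [pred y | (y == i) || (y == j)].

Lemma reach_endpoints x :
  exists2 y, endpoints y & connect [rel a b | 0 < trans w a b] x y.
Proof.
exists i; first by rewrite /endpoints /= eqxx.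
by rewrite (eq_connect (e' := [rel a b | 0 < w a b])) // => a b /=; rewrite trans_gt0E.
Qed.

Lemma first_hit_cons x y s :
  first_hit i j x (y :: s) = ~~ endpoints x && first_hit i j y s.
Proof. by rewrite /first_hit /endpoints /= negb_or andbCA. Qed.

Lemma sum_first_hit_cons (U : nmodType) n x (F : seq T -> U) :
  \sum_(s : n.+1.-tuple T | first_hit i j x s) F s =
  if endpoints x then 0
  else \sum_y \sum_(s : n.-tuple T | first_hit i j y s) F (y :: s).
Proof.
rewrite big_mkcond big_tuple_cons; case: ifP => Ex.
  by apply: big1 => y _; apply: big1 => s _; rewrite first_hit_cons Ex.
apply: eq_bigr => y _; rewrite [RHS]big_mkcond.
by apply: eq_bigr => s _; rewrite first_hit_cons Ex.
Qed.

Lemma sum_first_hit0 (U : nmodType) x (F : seq T -> U) :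
  \sum_(s : 0.-tuple T | first_hit i j x s) F s = if x == i then F [::] else 0.
Proof.
rewrite big_mkcond (big_pred1 [tuple]) => [|s]; last by rewrite [s]tuple0 /= eqxx.
by rewrite /first_hit /= andbT.
Qed.

Lemma path_prob_cons x y s : path_prob w x (y :: s) = trans w x y * path_prob w y s.
Proof. by rewrite /path_prob /steps /= big_cons. Qed.

Local Notation walk_op := (killed_op (trans w) endpoints).
Local Notation conn_walk_op := (conn_killed_op (trans w) endpoints sigma).

Lemma hit_prob_n_iter n x :
  hit_prob_n w i j x n = iter n walk_op (fun y => (y == i)%:R) x.
Proof.
rewrite /hit_prob_n; elim: n x => [|n IH] x.
  rewrite (sum_first_hit0 _ (path_prob w x)) /path_prob /steps /= big_nil.
  by case: (x == i).
rewrite (sum_first_hit_cons _ _ (path_prob w x)) /= /killed_op.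
case: (endpoints x) => //; apply: eq_bigr => y _; rewrite -IH mulr_sumr.
by apply: eq_bigr => s _; rewrite path_prob_cons.
Qed.

Lemma hit_sigma_n_iter n x :
  hit_sigma_n w sigma i j x n = iter n conn_walk_op (fun y => (y == i)%:R%:M) x.
Proof.
rewrite /hit_sigma_n; elim: n x => [|n IH] x;
  set F := fun s => path_prob w x s *: path_sigma sigma x s.
  rewrite (sum_first_hit0 _ F) /F /path_prob /steps /= big_nil scale1r.
  by case: (x == i); rewrite ?raddf0.
rewrite (sum_first_hit_cons _ _ F) /F /= /conn_killed_op.
case: (endpoints x) => //; apply: eq_bigr => y _.
rewrite -IH mulmx_sumr scaler_sumr; apply: eq_bigr => s _.
by rewrite path_prob_cons -scalemxAr scalerA.
Qed.

Variable V : T -> 'M[R]_d.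
Hypothesis HV : forall x, x != i -> x != j -> conn_laplacian w sigma V x = 0.
Hypothesis HVi : V i = 1%:M.
Hypothesis HVj : V j = 0.

Lemma voltage_fixpoint : V = (fun y => (y == i)%:R%:M) + conn_walk_op V.
Proof.
rewrite addrfctE; apply: funext => x; rewrite /conn_killed_op /endpoints /=.
have [->|xi] := eqVneq x i; first by rewrite HVi addr0.
have [->|xj] := eqVneq x j; first by rewrite HVj raddf0 addr0.
rewrite raddf0 add0r.
have balance : \sum_y w x y *: (sigma x y *m V y) = deg w x *: V x.
  have := HV xi xj; rewrite /conn_laplacian; under eq_bigr do rewrite scalerBr.
  by rewrite sumrB -scaler_suml => /eqP; rewrite subr_eq0 => /eqP <-.
under eq_bigr do rewrite /trans mulrC -scalerA.
by rewrite -scaler_sumr balance scalerA mulVf ?scale1r // gt_eqF ?deg_gt0.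
Qed.

Lemma hit_sigma_voltage x : hit_sigma w sigma i j x = V x.
Proof.
apply/matrixP => a b; rewrite mxE; apply: cvg_lim => //.
rewrite (_ : (fun n => _) =
             fun n => iter n conn_walk_op (fun y => (y == i)%:R%:M) x a b).
  exact: (conn_killed_series_cvg trans_ge0 trans_sum1 sigma_orth reach_endpoints
            voltage_fixpoint).
by apply: funext => n; rewrite hit_sigma_n_iter.
Qed.

Lemma voltage_eq0 x : hit_prob w i j x = 0 -> V x = 0.
Proof.
move=> hp0.
have prob_n0 : forall k, hit_prob_n w i j x k = 0.
  apply: (series_ge0_lim_eq0 (M := 1)) => // [k|n].
    by rewrite hit_prob_n_iter; apply: (iter_killed_op_ge0 _ trans_ge0) => y; rewrite ler0n.
  rewrite /series /= big_mkord; under eq_bigr do rewrite hit_prob_n_iter.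
  apply: (sum_iter_killed_op_le1 trans_ge0 trans_sum1) => y.
  by rewrite /endpoints /=; case: (y == i); rewrite /= ?lexx ?ler01 ?ler0n.
have sigma_n0 k a b : hit_sigma_n w sigma i j x k a b = 0.
  apply/eqP; rewrite -sqrf_eq0 eq_le sqr_ge0 andbT.
  apply: le_trans (sqr_mxentry_le_frob2 _ a b) _; rewrite hit_sigma_n_iter.
  apply: le_trans (frob2_iter_conn_killed_op_le _ trans_ge0 trans_sum1 sigma_orth _ _ _) _.
  apply: le_trans (_ : _ <= frob2 1%:M * hit_prob_n w i j x k) _; last first.
    by rewrite prob_n0 mulr0.
  rewrite hit_prob_n_iter -iter_killed_opZ; apply: (iter_killed_op_le _ trans_ge0) => y.
  by case: (y == i); rewrite ?raddf0 ?frob2_0 ?mulr0 ?mulr1.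
rewrite -hit_sigma_voltage; apply/matrixP => a b; rewrite !mxE.
rewrite (_ : series _ = fun=> 0) ?lim_cst //.
by apply: funext => n; apply: big1 => k _; apply: sigma_n0.
Qed.

End ConnectionGraph.

Theorem theorem5p8 (R : realType) (T : finType) (d : nat)
  (w : T -> T -> R) (sigma : T -> T -> 'M[R]_d)
  (HG : is_connection_graph w sigma)
  (i j : T) (hij : i != j)
  (V : T -> 'M[R]_d)
  (HV : forall x, x != i -> x != j -> conn_laplacian w sigma V x = 0)
  (HVi : V i = 1%:M) (HVj : V j = 0) :
  forall x : T, V x = hit_prob w i j x *: Omega0 w sigma x i j.
Proof.
move=> x; rewrite /Omega0 scalerA.
have [hp0|hp_neq0] := eqVneq (hit_prob w i j x) 0.
  by rewrite hp0 mul0r scale0r (voltage_eq0 HG hij HV HVi HVj hp0).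
by rewrite mulfV // scale1r (hit_sigma_voltage HG hij HV HVi HVj).
Qed.
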